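(* Let $1\leq k\leq n$, let $\Lambda_1,\dots,\Lambda_d\subset\mathbb{P}^n$ be $(k-1)$-dimensional linear subspaces satisfying $\mathrm{SP}(n-k)$, and let $P\subset\mathbb{P}^n$ be a linear subspace of dimension $\alpha\geq 0$. Let $2\leq r\leq d-1$ be an integer such that $P\cap\Lambda_i=\emptyset$ for $i=1,\dots,r$ and $P\cap\Lambda_i\neq\emptyset$ for $i=r+1,\dots,d$. Let $\pi_P\colon\mathbb{P}^n\dashrightarrow\mathbb{P}^{n-\alpha-1}$ be the linear projection from $P$ and set $\Gamma_i:=\pi_P(\Lambda_i)$ for $i=1,\dots,r$ (these are $(k-1)$-planes). Then $\Gamma_1,\dots,\Gamma_r$ satisfy $\mathrm{SP}(n-\alpha-1-k)$ in $\mathbb{P}^{n-\alpha-1}$.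
   Context: For $(k-1)$-dimensional linear subspaces $\Lambda_1,\dots,\Lambda_e\subset\mathbb{P}^N$ (not necessarily distinct), $\mathrm{SP}(N-k)$ means: for every $j\in\{1,\dots,e\}$ and every $(N-k)$-dimensional linear subspace $L\subset\mathbb{P}^N$ meeting each $\Lambda_i$ with $i\neq j$, $L$ also meets $\Lambda_j$. *)

From HB Require Import structures.
From mathcomp Require Import all_boot all_order all_algebra.
Unset Printing Implicit Defensive.
Import GRing.Theory.
Local Open Scope ring_scope.

(* Projective space P^N over K is modelled by row vectors K^(N+1):
   a projective linear subspace of dimension a is the row space of a
   matrix of rank a+1; the empty subspace is the zero space. *)

Definition meets {K : fieldType} {m p q : nat}
  (A : 'M[K]_(p, m)) (B : 'M[K]_(q, m)) : bool :=
  (A :&: B)%MS != 0.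

(* SP(N-k) for a family Lam_1..Lam_e of (k-1)-planes in P^N, where the
   ambient vector space is K^m with m = N+1: every (N-k)-plane L
   (i.e. rank m-k) meeting all Lam_i with i <> j also meets Lam_j. *)
Definition SP {K : fieldType} (m k : nat) {e p : nat} (Lam : 'I_e -> 'M[K]_(p, m)) : Prop :=
  forall (j : 'I_e) (L : 'M[K]_m),
    \rank L = (m - k)%N ->
    (forall i : 'I_e, i != j -> meets L (Lam i)) ->
    meets L (Lam j).

From mathcomp Require Import all_boot all_order all_algebra.
Set Implicit Arguments.
Unset Strict Implicit.
Unset Printing Implicit Defensive.
Local Open Scope ring_scope.

(* Pull the test plane back along the projection.  For an (n-alpha-1-k)-plane
   L' meeting every Gamma_i with i <> j, its preimage L contains P and is an
   (n-k)-plane; it meets Lambda_i for i > r because P does, and for i <= r,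
   i <> j, because L' meets Gamma_i.  SP(n-k) then gives a point of L in
   Lambda_j; it lies outside P since P and Lambda_j are disjoint, so its image
   is a point of L' on Gamma_j. *)

Section Meets.
Variables (F : fieldType) (m : nat).

Lemma meetsP {p q : nat} (A : 'M[F]_(p, m)) (B : 'M[F]_(q, m)) :
  reflect (exists v : 'rV_m, [/\ (v <= A)%MS, (v <= B)%MS & v != 0]) (meets A B).
Proof.
apply: (iffP rowV0Pn) => [[v] | [v [vA vB nz_v]]].
  by rewrite sub_capmx => /andP[vA vB] nz_v; exists v.
by exists v; rewrite ?sub_capmx ?vA.
Qed.

Lemma meets_rank_gt0 {p q : nat} (A : 'M[F]_(p, m)) (B : 'M[F]_(q, m)) :
  meets A B -> (0 < \rank A)%N.
Proof.
case/meetsP=> v [vA _ nz_v]; rewrite lt0n mxrank_eq0.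
by apply: contraNneq nz_v => A0; move: vA; rewrite A0 => /submx0null ->.
Qed.

Lemma meets_subl {p p' q : nat} (A : 'M[F]_(p, m)) (A' : 'M[F]_(p', m))
    (B : 'M[F]_(q, m)) :
  (A <= A')%MS -> meets A B -> meets A' B.
Proof.
move=> sAA' /meetsP[v [vA vB nz_v]]; apply/meetsP; exists v.
by split=> //; apply: submx_trans sAA'.
Qed.

End Meets.

Section Preimage.
Variables (F : fieldType) (m n p : nat) (M : 'M[F]_(m, n)) (L : 'M[F]_(p, n)).

Definition preimmx : 'M[F]_m := kermx (M *m cokermx L).

Lemma sub_preimmx {q : nat} (A : 'M[F]_(q, m)) :
  (A <= preimmx)%MS = (A *m M <= L)%MS.
Proof. by rewrite [RHS]submxE -mulmxA; apply/sub_kermxP/eqP. Qed.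

Lemma kermx_sub_preimmx : (kermx M <= preimmx)%MS.
Proof. by rewrite sub_preimmx mulmx_ker sub0mx. Qed.

Lemma mxrank_preimmx : row_full M -> \rank preimmx = (m - (n - \rank L))%N.
Proof. by move=> fullM; rewrite mxrank_ker (eqmxMfull _ fullM) mxrank_coker. Qed.

Lemma meets_preimmx_image {q : nat} (A : 'M[F]_(q, m)) :
  meets L (A *m M) -> meets preimmx A.
Proof.
case/meetsP=> w [wL /submxP[c def_w] nz_w]; apply/meetsP; exists (c *m A).
rewrite sub_preimmx submxMl -mulmxA -def_w wL; split=> //.
by apply: contraNneq nz_w => cA0; rewrite def_w mulmxA cA0 mul0mx.
Qed.

Lemma meets_image_preimmx {q : nat} (A : 'M[F]_(q, m)) :
  meets preimmx A -> ~~ meets (kermx M) A -> meets L (A *m M).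
Proof.
case/meetsP=> v [vL vA nz_v] kerM_A; apply/meetsP; exists (v *m M).
split; [by rewrite -sub_preimmx | exact: submxMr |].
apply: contra kerM_A => /eqP vM0; apply/meetsP; exists v.
by split=> //; apply/sub_kermxP.
Qed.

End Preimage.

Lemma exists_ord_neq {r : nat} : (1 < r)%N -> forall j : 'I_r, exists i, i != j.
Proof.
move=> lt1r j; have lt0r := ltnW lt1r.
by case: (eqVneq (Ordinal lt0r) j) => [<-|]; [exists (Ordinal lt1r) | exists (Ordinal lt0r)].
Qed.

Theorem lemma2p13 (K : closedFieldType) (n k d alpha r : nat)
  (Lam : 'I_d -> 'M[K]_(n.+1)) (P : 'M[K]_(n.+1))
  (M : 'M[K]_(n.+1, n - alpha))
  (hk1 : (1 <= k)%N) (hkn : (k <= n)%N)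
  (hLam : forall i, \rank (Lam i) = k)
  (hSP : SP n.+1 k Lam)
  (hP : \rank P = alpha.+1)
  (hr2 : (2 <= r)%N) (hrd : (r < d)%N)
  (hdisj : forall i : 'I_d, (i < r)%N -> ~~ meets P (Lam i))
  (hmeet : forall i : 'I_d, (r <= i)%N -> meets P (Lam i))
  (hker : (kermx M == P)%MS) (hfull : row_full M) :
  SP (n - alpha) k (fun j : 'I_r => Lam (widen_ord (ltnW hrd) j) *m M).
Proof.
move=> j L' rkL' meetsL'.
have /andP[sub_kerP sub_Pker] := hker.
(* \rank L' is a truncated difference; r >= 2 provides some Gamma_i0 met
   by L', so L' <> 0 and k < n - alpha. *)
have [i0 ne_i0j] := exists_ord_neq hr2 j.
have ltkm : (k < n - alpha)%N.
  by rewrite -subn_gt0 -rkL'; apply: meets_rank_gt0 (meetsL' i0 ne_i0j).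
have rkL : \rank (preimmx M L') = (n.+1 - k)%N.
  by rewrite mxrank_preimmx // rkL' subKn // ltnW.
have sub_PL : (P <= preimmx M L')%MS.
  exact: submx_trans sub_Pker (kermx_sub_preimmx M L').
apply: meets_image_preimmx; last first.
  apply: contra (hdisj (widen_ord (ltnW hrd) j) (ltn_ord j)).
  exact: meets_subl sub_kerP.
apply: (hSP _ _ rkL) => i ne_ij; case: (ltnP i r) => [ltir | leri].
  have -> : i = widen_ord (ltnW hrd) (Ordinal ltir) by apply: val_inj.
  apply/meets_preimmx_image/meetsL'.
  by apply: contra ne_ij => /eqP <-; apply/eqP/val_inj.
exact: meets_subl sub_PL (hmeet i leri).
Qed.
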